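(* Let $p$ be a probability distribution over $\{0,1\}^n$ and let $\gamma>0$. For every $\epsilon<\gamma/2$ the following holds: if the adapted ancestral sampling algorithm is given black-box access to real numbers $\pi(x_{1:k})$, for all $k\in[n]$ and all $x_{1:k}\in\{0,1\}^k$, satisfying $|\pi(x_{1:k})-p(x_{1:k})|\le \epsilon/2^k$, then it samples from a distribution $q$ with $$\|q-p\|_{\mathrm{TV}}\le \mathfrak{f}(\gamma)+\exp\!\left(\frac{4\epsilon n}{\gamma}\right)-1 .$$
   Context: For $x\in\{0,1\}^n$, $x_{1:k}=(x_1,\dots,x_k)$ and $p(x_{1:k})=\sum_{x_{k+1},\dots,x_n}p(x)$ is the marginal. Adapted ancestral sampling algorithm: given the estimates $\pi(\cdot)$, it produces $x$ bit by bit; at step $k$, with $x_{1:k-1}$ already fixed, let $a=\pi(x_{1:k-1},0)$ and $b=\pi(x_{1:k-1},1)$. If $a,b\ge0$, it sets $x_k=0$ with probability $a/(a+b)$ and $x_k=1$ otherwise; if one of $a,b$ is negative, it deterministically sets $x_k$ to the value whose estimate is non-negative. The output distribution is $q$. Define $S_\gamma=\{x\in\{0,1\}^n:\ p(x_{1:k})\ge\gamma/2^k\ \text{for all } k\in[n]\}$ and $\mathfrak{f}(\gamma)=1-\sum_{x\in S_\gamma}p(x)$. $\|\cdot\|_{\mathrm{TV}}$ is total variation distance. *)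

From HB Require Import structures.
From mathcomp Require Import all_boot all_order all_algebra.
From mathcomp Require Import reals sequences exp.
Set Implicit Arguments. Unset Strict Implicit. Unset Printing Implicit Defensive.
Import Order.TTheory GRing.Theory Num.Theory.
Local Open Scope ring_scope.

Section Defs.
Variables (R : realType) (n : nat).

(* x in {0,1}^n is an n-tuple of booleans; x_{1:k} = take k x. *)
Definition is_distr (p : n.-tuple bool -> R) : Prop :=
  (forall x, 0 <= p x) /\ \sum_(x : n.-tuple bool) p x = 1.

Definition marg (p : n.-tuple bool -> R) (s : seq bool) : R :=
  \sum_(x : n.-tuple bool | take (size s) x == s) p x.

(* probability that the adapted ancestral sampler sets the next bit to 0,
   given the already fixed prefix s *)
Definition prob0 (pi : seq bool -> R) (s : seq bool) : R :=
  let a := pi (rcons s false) in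
  let b := pi (rcons s true) in
  if (0 <= a) && (0 <= b) then a / (a + b)
  else if 0 <= a then 1 else 0.

Definition sampler_q (pi : seq bool -> R) (x : n.-tuple bool) : R :=
  \prod_(i < n)
    (if tnth x i then 1 - prob0 pi (take i x) else prob0 pi (take i x)).

Definition in_S (p : n.-tuple bool -> R) (gamma : R) (x : n.-tuple bool) : bool :=
  [forall k : 'I_n, gamma / 2 ^+ k.+1 <= marg p (take k.+1 x)].

Definition frak_f (p : n.-tuple bool -> R) (gamma : R) : R :=
  1 - \sum_(x : n.-tuple bool | in_S p gamma x) p x.

Definition tv_dist (q p : n.-tuple bool -> R) : R :=
  2^-1 * \sum_(x : n.-tuple bool) `|q x - p x|.

End Defs.

From HB Require Import structures.
From mathcomp Require Import all_boot all_order all_algebra.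
From mathcomp Require Import reals sequences exp.
From mathcomp Require Import ring lra.
Set Implicit Arguments. Unset Strict Implicit. Unset Printing Implicit Defensive.
Import Order.TTheory GRing.Theory Num.Theory.
Local Open Scope ring_scope.

(* For x in S_gamma every marginal satisfies p(x_{1:k}) >= gamma/2^k, so the
   estimates of p(x_{1:k}) and of its sibling are off by at most u = eps/gamma
   times p(x_{1:k}).  Hence at each step the sampler picks x_k with probability at
   least c = (1-u)/(1+2u) times the true conditional p(x_{1:k})/p(x_{1:k-1}), and
   the product over the n steps gives q(x) >= c^n p(x) on S_gamma.  This lower
   bound on S_gamma yields TV(q,p) <= 1 - c^n p(S_gamma) <= f(gamma) + (1 - c^n),
   and 1 - c^n <= c^-n - 1 <= exp(4un) - 1 because 1/c <= exp(4u) for u < 1/2. *)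

Section ChainRule.
Variables (R : pzSemiRingType) (T : finType).

Lemma sum_tuple_cons m (F : m.+1.-tuple T -> R) :
  \sum_(x : m.+1.-tuple T) F x =
  \sum_(b : T) \sum_(t : m.-tuple T) F [tuple of b :: t].
Proof.
rewrite pair_big /=.
rewrite (reindex (fun bt : T * m.-tuple T => [tuple of bt.1 :: bt.2])) //=.
exists (fun x : m.+1.-tuple T => (thead x, [tuple of behead x])).
  by move=> [b t] _ /=; congr pair; apply: val_inj.
by move=> x _; rewrite [in RHS](tuple_eta x).
Qed.

Lemma sum_prod_chain (P : seq T -> T -> R) :
  (forall s, \sum_b P s b = 1) ->
  forall m s, \sum_(x : m.-tuple T) \prod_(i < m) P (s ++ take i x) (tnth x i) = 1.
Proof.
move=> P1; elim=> [|m IH] s.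
  by rewrite (big_pred1 [tuple]) ?big_ord0 // => t; apply/esym/eqP; exact: tuple0.
rewrite sum_tuple_cons -[RHS](P1 s); apply: eq_bigr => b _.
rewrite -[RHS]mulr1 -[in RHS](IH (rcons s b)) mulr_sumr; apply: eq_bigr => t _.
rewrite big_ord_recl /= cats0; congr (_ * _); apply: eq_bigr => i _.
by rewrite tnthS /= cat_rcons.
Qed.

End ChainRule.

Section Sampler.
Variable R : realType.

Definition bit_prob (g : seq bool -> R) (s : seq bool) (b : bool) : R :=
  if b then 1 - g s else g s.

Lemma sum_bit_prob g s : \sum_b bit_prob g s b = 1.
Proof. by rewrite big_bool /bit_prob /= addrNK. Qed.

Lemma prob0_ge0 (pi : seq bool -> R) s : 0 <= prob0 pi s.
Proof.
rewrite /prob0; set a := pi _; set b := pi _.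
by case: (boolP (0 <= a)) => ha; case: (boolP (0 <= b)) => hb //=;
  rewrite ?ler01 ?lexx ?divr_ge0 ?addr_ge0.
Qed.

Lemma prob0_le1 (pi : seq bool -> R) s : prob0 pi s <= 1.
Proof.
rewrite /prob0; set a := pi _; set b := pi _.
case: (boolP (0 <= a)) => ha; case: (boolP (0 <= b)) => hb //=; rewrite ?ler01 ?lexx //.
have [->|ab_neq0] := eqVneq (a + b) 0; first by rewrite invr0 mulr0 ler01.
have ab_gt0 : 0 < a + b by rewrite lt0r ab_neq0 addr_ge0.
by rewrite ler_pdivrMr // mul1r lerDl.
Qed.

Lemma bit_prob_prob0_ge0 (pi : seq bool -> R) s b : 0 <= bit_prob (prob0 pi) s b.
Proof. by case: b; rewrite /= ?subr_ge0 ?prob0_le1 ?prob0_ge0. Qed.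

Lemma sampler_q_distr n (pi : seq bool -> R) : is_distr (sampler_q (n := n) pi).
Proof.
split=> [x|]; first by apply: prodr_ge0 => i _; exact: bit_prob_prob0_ge0.
exact: sum_prod_chain (sum_bit_prob (prob0 pi)) n [::].
Qed.

Lemma bit_prob_prob0 (pi : seq bool -> R) s b : 0 < pi (rcons s b) ->
  bit_prob (prob0 pi) s b =
  if 0 <= pi (rcons s (~~ b))
  then pi (rcons s b) / (pi (rcons s b) + pi (rcons s (~~ b))) else 1.
Proof.
rewrite /bit_prob /prob0; case: b => /= A_gt0; rewrite (ltW A_gt0) ?andbT //.
case: ifP => D_ge0; last by rewrite D_ge0 subr0.
have AD_neq0 : pi (rcons s false) + pi (rcons s true) != 0 by rewrite lt0r_neq0 // ltr_wpDl.
by rewrite [pi (rcons s true) + _]addrC; field.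
Qed.

Definition step_factor (u : R) : R := (1 - u) / (1 + 2 * u).

Lemma step_factor_ge0 u : 0 <= u <= 1 -> 0 <= step_factor u.
Proof. by case/andP=> u_ge0 u_le1; rewrite divr_ge0 //; lra. Qed.

Lemma step_factor_le1 u : 0 <= u -> step_factor u <= 1.
Proof. by move=> u_ge0; rewrite ler_pdivrMr; lra. Qed.

Lemma noisy_estimate_gt0 (u e A m : R) :
  u < 1/2 -> e <= u * m -> 0 < m -> `|A - m| <= e -> 0 < A.
Proof.
move=> u_lt e_le m_gt0 /ler_normlP[A_lo _].
have : 0 < (1/2 - u) * m by apply: mulr_gt0; lra.
lra.
Qed.

Lemma noisy_ratio_ge (u e A D m1 m2 : R) :
  u < 1/2 -> e <= u * m1 -> 0 < m1 -> 0 <= m2 ->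
  `|A - m1| <= e -> `|D - m2| <= e ->
  step_factor u * m1 <= (if 0 <= D then A / (A + D) else 1) * (m1 + m2).
Proof.
move=> u_lt e_le m1_gt0 m2_ge0 errA errD.
have A_gt0 := noisy_estimate_gt0 u_lt e_le m1_gt0 errA.
have e_ge0 : 0 <= e := le_trans (normr_ge0 _) errA.
have u_ge0 : 0 <= u by nra.
move: errA errD => /ler_normlP[A_lo A_hi] /ler_normlP[_ D_hi].
have d_gt0 : 0 < 1 + 2 * u by lra.
rewrite /step_factor mulrAC ler_pdivrMr //.
case: ifP => D_ge0; last by rewrite mul1r; nra.
have AD_gt0 : 0 < A + D by lra.
have -> : A / (A + D) * (m1 + m2) * (1 + 2 * u) = A * ((1 + 2 * u) * (m1 + m2)) / (A + D).
  by field; rewrite lt0r_neq0.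
rewrite ler_pdivlMr //.
have A_ge : (1 - u) * m1 <= A by lra.
have AD_le : A + D <= (1 + 2 * u) * (m1 + m2).
  by have := mulr_ge0 u_ge0 m2_ge0; lra.
by apply: le_trans (ler_wpM2l _ AD_le) (ler_wpM2r _ A_ge); apply: mulr_ge0; lra.
Qed.

Lemma step_factor_inv_le_expR (u : R) :
  0 <= u -> u < 1/2 -> (1 + 2 * u) / (1 - u) <= expR (4 * u).
Proof.
move=> u_ge0 u_lt; rewrite ler_pdivrMr; last lra.
have sq_ge : 1 + 2 * u <= (1 + 2 * u) ^+ 2 * (1 - u).
  rewrite -subr_ge0 (_ : _ - _ = (1 + 2 * u) * u * (1 - 2 * u)); last by ring.
  by rewrite !mulr_ge0 //; lra.
have -> : 4 * u = 2%:R * (2 * u) by ring.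
rewrite expRM_natl; apply: le_trans sq_ge _.
by rewrite ler_wpM2r ?lerXn2r ?nnegrE ?expR_ge1Dx ?expR_ge0 //; lra.
Qed.

Lemma one_sub_step_factor_expn (u : R) n : 0 <= u -> u < 1/2 ->
  1 - step_factor u ^+ n <= expR (n%:R * (4 * u)) - 1.
Proof.
move=> u_ge0 u_lt.
set r := (1 + 2 * u) / (1 - u).
have r_gt0 : 0 < r by rewrite divr_gt0; lra.
have -> : step_factor u ^+ n = (r ^+ n)^-1.
  by rewrite -exprVn /step_factor /r invf_div.
have r_le : r ^+ n <= expR (n%:R * (4 * u)).
  by rewrite expRM_natl lerXn2r ?nnegrE ?step_factor_inv_le_expR ?expR_ge0 // ltW.
have rn_gt0 : 0 < r ^+ n := exprn_gt0 n r_gt0.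
suff : 1 - (r ^+ n)^-1 <= r ^+ n - 1 by lra.
move: rn_gt0; generalize (r ^+ n) => X X_gt0.
rewrite -subr_ge0.
have -> : X - 1 - (1 - X^-1) = (X - 1) ^+ 2 / X by field; rewrite lt0r_neq0.
by rewrite divr_ge0 ?sqr_ge0 ?ltW.
Qed.

Section Marginals.
Variables (n : nat) (p : n.-tuple bool -> R).

Lemma marg_rcons s : (size s < n)%N ->
  marg p (rcons s false) + marg p (rcons s true) = marg p s.
Proof.
move=> s_lt; rewrite /marg !size_rcons.
rewrite [RHS](bigID (fun x : n.-tuple bool => nth false x (size s))) /= addrC.
by congr (_ + _); apply: eq_bigl => x;
  rewrite (take_nth false) ?size_tuple // eqseq_rcons; case: nth; rewrite ?andbT ?andbF.
Qed.

Lemma marg_ge0 s : (forall x, 0 <= p x) -> 0 <= marg p s.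
Proof. by move=> p_ge0; apply: sumr_ge0. Qed.

Lemma marg_nil : is_distr p -> marg p [::] = 1.
Proof. by move=> [_ <-]; apply: eq_bigl => x; rewrite take0. Qed.

Lemma marg_tuple (x : n.-tuple bool) : marg p x = p x.
Proof.
rewrite /marg (big_pred1 x) // => y /=.
by rewrite size_tuple -{1}(size_tuple y) take_size.
Qed.

End Marginals.

Section SamplerOnS.
Variables (n : nat) (p : n.-tuple bool -> R) (gamma eps : R) (pi : seq bool -> R).
Hypotheses (p_distr : is_distr p) (gamma_gt0 : 0 < gamma) (eps_lt : eps < gamma / 2).
Hypothesis pi_err : forall s : seq bool, (0 < size s <= n)%N ->
  `|pi s - marg p s| <= eps / 2 ^+ size s.

Lemma eps_div_gamma_lt_half : eps / gamma < 1/2.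
Proof. by rewrite ltr_pdivrMr // mul1r mulrC. Qed.

Lemma eps_div_gamma_ge0 : (0 < n)%N -> 0 <= eps / gamma.
Proof.
move=> n_gt0; have := le_trans (normr_ge0 _) (pi_err (s := [:: false]) n_gt0).
by rewrite expr1 => eps2_ge0; rewrite divr_ge0 ?(ltW gamma_gt0) //; lra.
Qed.

Lemma bit_prob_ge_marg s b : (size s < n)%N ->
  gamma / 2 ^+ (size s).+1 <= marg p (rcons s b) ->
  step_factor (eps / gamma) * marg p (rcons s b) <= bit_prob (prob0 pi) s b * marg p s.
Proof.
move=> s_lt m1_ge.
have err c : `|pi (rcons s c) - marg p (rcons s c)| <= eps / 2 ^+ (size s).+1.
  by rewrite -(size_rcons s c); apply: pi_err; rewrite size_rcons.
have pow_gt0 : 0 < 2 ^+ (size s).+1 :> R by exact: exprn_gt0.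
have m1_gt0 : 0 < marg p (rcons s b) := lt_le_trans (divr_gt0 gamma_gt0 pow_gt0) m1_ge.
have e_le : eps / 2 ^+ (size s).+1 <= eps / gamma * marg p (rcons s b).
  have -> : eps / 2 ^+ (size s).+1 = eps / gamma * (gamma / 2 ^+ (size s).+1).
    by field; rewrite !lt0r_neq0.
  by rewrite ler_wpM2l // eps_div_gamma_ge0 // (leq_ltn_trans (leq0n _) s_lt).
have -> : marg p s = marg p (rcons s b) + marg p (rcons s (~~ b)).
  by rewrite -(marg_rcons p s_lt); case: (b) => //=; rewrite addrC.
rewrite bit_prob_prob0; last exact: noisy_estimate_gt0 eps_div_gamma_lt_half e_le m1_gt0 (err b).
apply: noisy_ratio_ge eps_div_gamma_lt_half e_le m1_gt0 _ (err b) (err (~~ b)).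
by apply: marg_ge0; case: p_distr.
Qed.

Lemma prefix_prob_lower_bound x : in_S p gamma x -> forall k, (k <= n)%N ->
  step_factor (eps / gamma) ^+ k * marg p (take k x) <=
  \prod_(i < k) bit_prob (prob0 pi) (take i x) (nth false x i).
Proof.
move=> xS; elim=> [|k IH] k_lt; first by rewrite big_ord0 expr0 mul1r take0 marg_nil.
have n_gt0 : (0 < n)%N := leq_ltn_trans (leq0n k) k_lt.
have size_take_k : size (take k x) = k by rewrite size_takel // size_tuple ltnW.
have take_kS : take k.+1 x = rcons (take k x) (nth false x k).
  by rewrite (take_nth false) // size_tuple.
have m1_ge : gamma / 2 ^+ (size (take k x)).+1 <= marg p (rcons (take k x) (nth false x k)).
  by rewrite size_take_k -take_kS; exact: (forallP xS) (Ordinal k_lt).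
have c_ge0 : 0 <= step_factor (eps / gamma).
  by rewrite step_factor_ge0 // eps_div_gamma_ge0 //=; have := eps_div_gamma_lt_half; lra.
rewrite big_ord_recr /= exprSr -mulrA take_kS.
apply: le_trans (ler_wpM2l (exprn_ge0 k c_ge0) (bit_prob_ge_marg _ m1_ge)) _.
  by rewrite size_take_k.
by rewrite mulrCA mulrC ler_wpM2r ?bit_prob_prob0_ge0 // IH // ltnW.
Qed.

Lemma sampler_q_ge_in_S x : in_S p gamma x ->
  step_factor (eps / gamma) ^+ n * p x <= sampler_q pi x.
Proof.
move=> xS; have := prefix_prob_lower_bound xS (leqnn n).
rewrite take_oversize ?size_tuple // marg_tuple.
by under [X in _ <= X -> _]eq_bigr do rewrite -tnth_nth.
Qed.

End SamplerOnS.
End Sampler.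

Lemma tv_dist_le_one_sub (R : realType) n (q p : n.-tuple bool -> R)
    (S : pred (n.-tuple bool)) (C : R) :
  is_distr q -> is_distr p -> C <= 1 -> (forall x, S x -> C * p x <= q x) ->
  tv_dist q p <= 1 - C * \sum_(x | S x) p x.
Proof.
move=> [q_ge0 q1] [p_ge0 p1] C_le1 q_ge.
pose h x := if S x then (1 - C) * p x else p x.
have norm_le x : `|q x - p x| <= q x - p x + 2 * h x.
  have := q_ge0 x; have := p_ge0 x; rewrite /h ler_norml.
  case: ifP => Sx px qx; last lra.
  have : 0 <= (1 - C) * p x by apply: mulr_ge0 => //; lra.
  by have := q_ge x Sx; lra.
have sum_h : \sum_x h x = 1 - C * \sum_(x | S x) p x.
  rewrite [LHS](bigID S) -p1 [\sum_x p x](bigID S) /= mulr_sumr.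
  have -> : \sum_(x | S x) h x = \sum_(x | S x) p x - \sum_(x | S x) C * p x.
    by rewrite -sumrB; apply: eq_bigr => x Sx; rewrite /h Sx mulrBl mul1r.
  have -> : \sum_(x | ~~ S x) h x = \sum_(x | ~~ S x) p x.
    by apply: eq_bigr => x /negbTE Sx; rewrite /h Sx.
  by rewrite addrAC.
rewrite /tv_dist -sum_h.
have : \sum_x `|q x - p x| <= \sum_x (q x - p x + 2 * h x).
  by apply: ler_sum => x _; exact: norm_le.
rewrite big_split /= sumrB q1 p1 -mulr_sumr.
lra.
Qed.

Theorem theorem7 (R : realType) (n : nat) (p : n.-tuple bool -> R)
  (gamma eps : R) (pi : seq bool -> R) :
  is_distr p -> 0 < gamma -> eps < gamma / 2 ->
  (forall s : seq bool, (0 < size s <= n)%N ->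
     `|pi s - marg p s| <= eps / 2 ^+ size s) ->
  tv_dist (sampler_q pi) p <=
    frak_f p gamma + expR (4 * eps * n%:R / gamma) - 1.
Proof.
move=> p_distr gamma_gt0 eps_lt pi_err.
set C := step_factor (eps / gamma) ^+ n.
have [C_le1 C_exp] : C <= 1 /\ 1 - C <= expR (4 * eps * n%:R / gamma) - 1.
  have -> : 4 * eps * n%:R / gamma = n%:R * (4 * (eps / gamma)).
    by field; rewrite lt0r_neq0.
  rewrite /C; have [->|n_gt0] := posnP n; first by rewrite expr0 mul0r expR0; lra.
  have u_ge0 := eps_div_gamma_ge0 gamma_gt0 pi_err n_gt0.
  have u_lt := eps_div_gamma_lt_half gamma_gt0 eps_lt.
  split; last exact: one_sub_step_factor_expn.
  apply: exprn_ile1; last exact: step_factor_le1.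
  by apply: step_factor_ge0; rewrite u_ge0 /=; lra.
have tv_le := tv_dist_le_one_sub (sampler_q_distr n pi) p_distr C_le1
  (sampler_q_ge_in_S p_distr gamma_gt0 eps_lt pi_err).
have PS_le1 : \sum_(x | in_S p gamma x) p x <= 1.
  have [p_ge0 <-] := p_distr.
  by rewrite [leRHS](bigID (in_S p gamma)) /= lerDl sumr_ge0.
rewrite /frak_f; apply: le_trans tv_le _.
have : 0 <= (1 - C) * (1 - \sum_(x | in_S p gamma x) p x) by apply: mulr_ge0; lra.
lra.
Qed.
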